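(* Consider the slotted content-push system described in the context, operated under a threshold-based policy with integer threshold $C_{\mathrm{thr}}$, $1\le C_{\mathrm{thr}}\le N$: in every slot $k$ with $C_k<C_{\mathrm{thr}}$ the SBS takes the push action $u_k=2$. Assume that the energy $E_p$ required for a push is always available. Then, in the stationary regime, the probability that the SBS pushes a content in a slot is $$\Pr(u_k=2)=\frac{p_c\,C_{\mathrm{thr}}}{N+p_c}.$$
   Context: Time is slotted, $k=1,2,\dots$. There are $N$ contents of interest, ranked $c_1,\dots,c_N$. The content at rank $i$ has popularity (Zipf) $f_i=\frac{i^{-v}}{\sum_{j=1}^N j^{-v}}$ with skew $v\ge 0$. In each slot, with probability $p_c\in(0,1]$, one content is selected uniformly at random (probability $1/N$ each) and removed; the contents ranked below it move up one rank, and a new content enters at rank $N$. Users store the pushed contents, which are always the $C_k$ most popular ones $c_1,\dots,c_{C_k}$, where $C_k\in\{0,\dots,N\}$ is the push state. In each slot the SBS takes an action $u_k\in\{0,1,2\}$ (sleep, unicast, push). A push transmits content $c_{C_k+1}$ to all users at energy cost $E_p$. The push state evolves as follows. If $u_k\in\{0,1\}$: $C_{k+1}=C_k-1$ with probability $p_cC_k/N$, and $C_{k+1}=C_k$ otherwise. If $u_k=2$ (only allowed when $C_k<N$): $C_{k+1}=C_k$ with probability $p_cC_k/N$, and $C_{k+1}=C_k+1$ otherwise. *)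

From HB Require Import structures.
From mathcomp Require Import all_boot all_order all_algebra.
Set Implicit Arguments. Unset Strict Implicit. Unset Printing Implicit Defensive.
Import Order.TTheory GRing.Theory Num.Theory.
Local Open Scope ring_scope.

(* Push-state Markov chain on states C in {0,...,N} (type 'I_N.+1),
   under a stationary (state-feedback) policy u : state -> action,
   actions 0 = sleep, 1 = unicast, 2 = push.
   trans u i j = Pr(C_{k+1} = j | C_k = i, u_k = u i). *)
Definition trans (R : realFieldType) (N : nat) (pc : R)
  (u : 'I_N.+1 -> nat) (i j : 'I_N.+1) : R :=
  let q := pc * (nat_of_ord i)%:R / N%:R in
  if u i == 2%N then
    (if nat_of_ord j == nat_of_ord i then q
     else if nat_of_ord j == (nat_of_ord i).+1 then 1 - q else 0)
  else
    (if (nat_of_ord j).+1 == nat_of_ord i then q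
     else if nat_of_ord j == nat_of_ord i then 1 - q else 0).

Definition stationary (R : realFieldType) (N : nat) (pc : R)
  (u : 'I_N.+1 -> nat) (pi : 'I_N.+1 -> R) : Prop :=
  (forall i, 0 <= pi i) /\ (\sum_i pi i = 1) /\
  (forall j, \sum_i pi i * trans pc u i j = pi j).

Definition push_prob (R : realFieldType) (N : nat)
  (u : 'I_N.+1 -> nat) (pi : 'I_N.+1 -> R) : R :=
  \sum_(i | u i == 2%N) pi i.

From HB Require Import structures.
From mathcomp Require Import all_boot all_order all_algebra.
From mathcomp Require Import zify ring.
Set Implicit Arguments. Unset Strict Implicit. Unset Printing Implicit Defensive.
Import Order.TTheory GRing.Theory Num.Theory.
Local Open Scope ring_scope.

(* Under the threshold policy the push state is a birth-death chain on
   {0, ..., N}: below the threshold it moves up with probability 1 - pc n / N,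
   from the threshold on it moves down with probability pc n / N.  For a
   birth-death chain, stationarity is equivalent to zero net probability flow
   across every cut {0..k} | {k+1..N}.  Below C - 1 the only flow is upward and
   above C only downward, so a stationary law lives on {C - 1, C}, and the cut
   between these two states gives (1 - pc (C-1) / N) x = (pc C / N) (1 - x) for
   x = Pr(C_k = C - 1) = Pr(u_k = 2). *)

Lemma big_nat_supp1 (R : nmodType) (m n a : nat) (F : nat -> R) :
  (m <= a < n)%N -> (forall i, (m <= i < n)%N -> i != a -> F i = 0) ->
  \sum_(m <= i < n) F i = F a.
Proof.
move=> ha hF; transitivity (\sum_(m <= i < n | i == a) F i).
  by rewrite [RHS]big_mkcond; apply: eq_big_nat => i hi; case: eqVneq => // ne; rewrite hF.
by rewrite big_nat1_eq ha.
Qed.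

Section BirthDeath.

Variables (R : comPzRingType) (N : nat) (up down : nat -> R).

Definition bd_kernel (i j : 'I_N.+1) : R :=
  if j == i.+1 :> nat then up i
  else if j.+1 == i :> nat then down i
  else if j == i :> nat then 1 - up i - down i else 0.

(* [ext pi] extends [pi] by 0 outside {0, ..., N}, so that the neighbours
   n - 1 and n + 1 of a state can always be named. *)
Definition ext (pi : 'I_N.+1 -> R) (n : nat) : R :=
  if (n < N.+1)%N then pi (inord n) else 0.

Definition flux (p : nat -> R) (k : nat) : R := up k * p k - down k.+1 * p k.+1.

Lemma ext_ord pi (i : 'I_N.+1) : ext pi i = pi i.
Proof. by rewrite /ext ltn_ord inord_val. Qed.

Lemma ext_out pi n : (N < n)%N -> ext pi n = 0.
Proof. by move=> ltNn; rewrite /ext ltnNge ltNn. Qed.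

Lemma ext_fun (p : nat -> R) n :
  (forall k, (N < k)%N -> p k = 0) -> ext (fun i : 'I_N.+1 => p i) n = p n.
Proof.
by move=> p0; rewrite /ext; case: ltnP => [hn|/p0 //]; rewrite inordK.
Qed.

Lemma big_ord_ext (G : nat -> R -> R) pi :
  \sum_(i < N.+1) G i (pi i) = \sum_(0 <= n < N.+1) G n (ext pi n).
Proof. by rewrite big_mkord; apply: eq_bigr => i _; rewrite ext_ord. Qed.

Lemma sum_ext_eq (c : nat -> R) pi k :
  \sum_(i < N.+1) (if i == k :> nat then c i * pi i else 0) = c k * ext pi k.
Proof.
transitivity (\sum_(i < N.+1 | i == k :> nat) c i * ext pi i).
  by rewrite [RHS]big_mkcond; apply: eq_bigr => i _; rewrite ext_ord.
rewrite -(big_mkord (fun n => n == k) (fun n => c n * ext pi n)) big_nat1_eq.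
by rewrite /ext; case: ltnP; rewrite ?mulr0.
Qed.

Lemma bd_kernel_split pi (i j : 'I_N.+1) :
  pi i * bd_kernel i j =
    (if i == j :> nat then (1 - up i - down i) * pi i else 0)
  + (if i == j.+1 :> nat then down i * pi i else 0)
  + (if i.+1 == j :> nat then up i * pi i else 0).
Proof.
rewrite /bd_kernel; move: (nat_of_ord i) (nat_of_ord j) => a b.
by repeat case: eqP => ?; rewrite ?mulr0 ?addr0 ?add0r; try ring; exfalso; lia.
Qed.

Hypothesis down0 : down 0 = 0.

Lemma bd_inflow pi (j : 'I_N.+1) :
  \sum_i pi i * bd_kernel i j - pi j =
    (if nat_of_ord j is k.+1 then flux (ext pi) k else 0) - flux (ext pi) j.
Proof.
under eq_bigr do rewrite bd_kernel_split.
rewrite !big_split /= (sum_ext_eq (fun n => 1 - up n - down n)) sum_ext_eq.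
rewrite -ext_ord /flux; case: (nat_of_ord j) => [|k].
  by rewrite big1 // down0; ring.
rewrite (eq_bigr (fun i : 'I_N.+1 => if i == k :> nat then up i * pi i else 0)).
  by rewrite sum_ext_eq; ring.
by move=> i _; rewrite eqSS.
Qed.

Lemma bd_balanceP pi :
  (forall j, \sum_i pi i * bd_kernel i j = pi j) <->
  (forall k, (k <= N)%N -> flux (ext pi) k = 0).
Proof.
split=> [bal|flux0 j]; last first.
  have hj : (j <= N)%N by rewrite -ltnS.
  apply/eqP; rewrite -subr_eq0 bd_inflow flux0 // subr0.
  by case: (nat_of_ord j) hj => // k hk; rewrite flux0 // ltnW.
have inflow k : (k <= N)%N ->
    (if k is k'.+1 then flux (ext pi) k' else 0) = flux (ext pi) k.
  move=> hk; apply/eqP; rewrite -subr_eq0.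
  by have := bd_inflow pi (inord k); rewrite bal subrr inordK // => <-.
elim=> [|k IH] hk; first by rewrite -inflow.
by rewrite -inflow // IH // ltnW.
Qed.

End BirthDeath.

Lemma two_state_balance (F : fieldType) (a b x y : F) :
  x + y = 1 -> a * x = b * y -> a + b != 0 -> x = b / (a + b).
Proof.
move=> sum1 bal ab0; apply: (mulIf ab0); rewrite divfK //.
by rewrite mulrC mulrDl bal -mulrDr addrC sum1 mulr1.
Qed.

Section Threshold.

Variables (R : realFieldType) (N C : nat) (pc : R).

(* Probability that one of the n most popular contents is replaced in a slot. *)
Definition drop_prob (n : nat) : R := pc * n%:R / N%:R.
Definition thr_up (n : nat) : R := if (n < C)%N then 1 - drop_prob n else 0.
Definition thr_down (n : nat) : R := if (n < C)%N then 0 else drop_prob n.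

Lemma thr_down0 : thr_down 0 = 0.
Proof. by rewrite /thr_down /drop_prob mulr0 mul0r if_same. Qed.

Lemma trans_threshold (u : 'I_N.+1 -> nat) :
  (forall i, (u i == 2%N) = (i < C)%N) ->
  forall i j, trans pc u i j = bd_kernel thr_up thr_down i j.
Proof.
move=> hu i j; rewrite /trans /bd_kernel hu /thr_up /thr_down -/(drop_prob i) /=.
move: (nat_of_ord i) (nat_of_ord j) => a b.
by case: ltnP => _; repeat case: eqP => ?; try ring; exfalso; lia.
Qed.

Hypotheses (pc_gt0 : 0 < pc) (pc_le1 : pc <= 1) (C_gt0 : (0 < C)%N) (C_leN : (C <= N)%N).

Let N_gt0 : (0 < N)%N. Proof. exact: leq_trans C_leN. Qed.

Lemma drop_prob_ge0 n : 0 <= drop_prob n.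
Proof. by rewrite /drop_prob divr_ge0 ?mulr_ge0 ?ler0n ?ltW. Qed.

Lemma drop_prob_gt0 n : (0 < n)%N -> 0 < drop_prob n.
Proof. by move=> n_gt0; rewrite /drop_prob divr_gt0 ?mulr_gt0 ?ltr0n. Qed.

Lemma drop_prob_lt1 n : (n < N)%N -> drop_prob n < 1.
Proof.
move=> ltnN; rewrite /drop_prob ltr_pdivrMr ?ltr0n // mul1r.
by apply: le_lt_trans (_ : n%:R < _); rewrite ?ltr_nat // ler_piMl.
Qed.

Lemma threshold_flux0P (p : nat -> R) :
  (forall n, (N < n)%N -> p n = 0) ->
  (forall k, (k <= N)%N -> flux thr_up thr_down p k = 0) <->
  (forall n : nat, n != C.-1 -> n != C -> p n = 0) /\
  (thr_up C.-1 * p C.-1 = thr_down C * p C).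
Proof.
move=> pN; split=> [flux0 | [supp bal] k kN].
  split=> [n n1 n2|]; last first.
    have /eqP := flux0 C.-1 (leq_trans (leq_pred C) C_leN).
    by rewrite /flux prednK // subr_eq0 => /eqP.
  have [ltnC|leCn] := ltnP n C.
    have /eqP := flux0 n (ltnW (leq_trans ltnC C_leN)).
    rewrite /flux /thr_up /thr_down ltnC ifT; last by lia.
    rewrite mul0r subr0 mulf_eq0 subr_eq0 eq_sym lt_eqF ?drop_prob_lt1 //=.
      by move/eqP.
    exact: leq_trans ltnC C_leN.
  have [/pN //|leNn] := ltnP N n.
  have ltCn : (C < n)%N by rewrite ltn_neqAle eq_sym n2 leCn.
  have n_gt0 : (0 < n)%N by exact: leq_trans ltCn.
  have lt_n1C : (n.-1 < C)%N = false by rewrite ltnNge -ltnS prednK // ltCn.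
  have /eqP := flux0 n.-1 (leq_trans (leq_pred n) leNn).
  rewrite /flux /thr_up /thr_down lt_n1C prednK // ltnNge leCn /=.
  rewrite mul0r sub0r oppr_eq0 mulf_eq0 gt_eqF ?drop_prob_gt0 //=.
  by move/eqP.
have [->|kC] := eqVneq k C.-1; first by rewrite /flux prednK // bal subrr.
rewrite /flux /thr_up /thr_down; have [ltkC|leCk] := ltnP k.+1 C.
  by rewrite ltnW // (supp k) ?mulr0 ?mul0r ?subr0 //; lia.
by rewrite ltnNge (_ : (C <= k)%N) ?mul0r ?supp ?mulr0 ?subrr //; lia.
Qed.

Lemma thr_up_pred_gt0 : 0 < thr_up C.-1.
Proof.
rewrite /thr_up prednK // leqnn subr_gt0 drop_prob_lt1 //.
by rewrite -ltnS prednK.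
Qed.

Lemma thr_down_ge0 n : 0 <= thr_down n.
Proof. by rewrite /thr_down; case: ifP; rewrite ?drop_prob_ge0. Qed.

Lemma threshold_push_value :
  thr_down C / (thr_up C.-1 + thr_down C) = pc * C%:R / (N%:R + pc).
Proof.
have predC : C.-1%:R = C%:R - 1 :> R by rewrite -{2}(prednK C_gt0) -natr1 addrK.
have N0 : N%:R != 0 :> R by rewrite pnatr_eq0 -lt0n.
have Npc0 : N%:R + pc != 0 by rewrite gt_eqF // ltr_wpDl.
rewrite /thr_down /thr_up ltnn prednK // leqnn /drop_prob predC.
by field; rewrite Npc0 N0.
Qed.

Variable u : 'I_N.+1 -> nat.
Hypothesis u_thr : forall i, (u i == 2%N) = (i < C)%N.

Lemma threshold_balanceP pi :
  (forall j, \sum_i pi i * trans pc u i j = pi j) <->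
  (forall n : nat, n != C.-1 -> n != C -> ext pi n = 0) /\
  (thr_up C.-1 * ext pi C.-1 = thr_down C * ext pi C).
Proof.
rewrite -threshold_flux0P; last exact: ext_out.
rewrite -(bd_balanceP _ thr_down0).
by split=> bal j; rewrite -bal; apply: eq_bigr => i _; rewrite trans_threshold.
Qed.

Section Supported.

Variable pi : 'I_N.+1 -> R.
Hypothesis supp : forall n : nat, n != C.-1 -> n != C -> ext pi n = 0.

Lemma sum_supported : \sum_i pi i = ext pi C.-1 + ext pi C.
Proof.
rewrite (big_ord_ext (fun _ x => x)) (big_cat_nat _ (n := C)) //=; last exact: leqW.
rewrite (big_nat_supp1 (a := C.-1)) ?(big_nat_supp1 (a := C)) //.
- lia.
- by move=> n /andP[leCn _] nC; rewrite supp //; lia.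
- lia.
- by move=> n /andP[_ ltnC] nC; rewrite supp //; lia.
Qed.

Lemma push_prob_supported : push_prob u pi = ext pi C.-1.
Proof.
rewrite /push_prob (eq_bigl (fun i : 'I_N.+1 => (i < C)%N)) => [|i]; last exact: u_thr.
rewrite big_mkcond (big_ord_ext (fun n x => if (n < C)%N then x else 0)).
rewrite (big_nat_supp1 (a := C.-1)) ?prednK ?leqnn //=; first exact: leqW.
by move=> n _ nC; case: ltnP => // ltnC; rewrite supp //; lia.
Qed.

End Supported.

Lemma threshold_push_prob pi : stationary pc u pi ->
  push_prob u pi = thr_down C / (thr_up C.-1 + thr_down C).
Proof.
case=> _ [sum1 /threshold_balanceP [supp bal]].
rewrite push_prob_supported //; apply: two_state_balance bal _.
  by rewrite -(sum_supported supp).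
by rewrite gt_eqF // (lt_le_trans thr_up_pred_gt0) // lerDl thr_down_ge0.
Qed.

Lemma threshold_stationary_exists : exists pi, stationary pc u pi.
Proof.
set a := thr_up C.-1; set b := thr_down C.
have a_gt0 : 0 < a := thr_up_pred_gt0.
have b_ge0 : 0 <= b := thr_down_ge0 C.
have ab_gt0 : 0 < a + b by rewrite (lt_le_trans a_gt0) // lerDl.
pose p (n : nat) := if n == C.-1 then b / (a + b) else if n == C then a / (a + b) else 0.
have supp n : n != C.-1 -> n != C -> p n = 0.
  by move=> n1 n2; rewrite /p (negbTE n1) (negbTE n2).
have extp n : ext (fun i : 'I_N.+1 => p i) n = p n.
  by apply: ext_fun => k ltNk; rewrite supp //; lia.
have CC1 : (C == C.-1) = false by lia.
exists (fun i : 'I_N.+1 => p i); split; [|split].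
- move=> i; rewrite /p; case: ifP => _; first exact: divr_ge0 b_ge0 (ltW ab_gt0).
  by case: ifP => _ //; exact: divr_ge0 (ltW a_gt0) (ltW ab_gt0).
- rewrite (@sum_supported (fun i : 'I_N.+1 => p i)) => [|n n1 n2]; last by rewrite extp supp.
  by rewrite !extp /p eqxx CC1 eqxx -mulrDl addrC divff ?gt_eqF.
- apply/threshold_balanceP; split=> [n n1 n2|]; first by rewrite extp supp.
  by rewrite !extp /p eqxx CC1 eqxx mulrCA.
Qed.

End Threshold.

Theorem lemma1 (R : realFieldType) (N Cthr : nat) (pc : R)
  (hpc0 : 0 < pc) (hpc1 : pc <= 1)
  (hthr1 : (1 <= Cthr)%N) (hthrN : (Cthr <= N)%N)
  (u : 'I_N.+1 -> nat)
  (hu_act : forall i, (u i <= 2)%N)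
  (hu_thr : forall i, (u i == 2%N) = (nat_of_ord i < Cthr)%N) :
  (exists pi, stationary pc u pi) /\
  (forall pi, stationary pc u pi ->
     push_prob u pi = pc * Cthr%:R / (N%:R + pc)).
Proof.
split; first exact: (threshold_stationary_exists hpc0 hpc1 hthr1 hthrN hu_thr).
move=> pi st.
rewrite (threshold_push_prob hpc0 hpc1 hthr1 hthrN hu_thr st).
exact: threshold_push_value.
Qed.
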